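(* Let $\underline{L}$ be a finite lattice and $\underline{S}=[u,v]$ an interval of $\underline{L}$. If $\underline{S}$ is quasi-dismantling for $\underline{L}$, then $\underline{L}\setminus\underline{S}$ (the set $L\setminus S$ with the restricted order) is a lattice; in particular, $L\setminus S$ is a sublattice of $\underline{L}$, i.e. for all $a,b\in L\setminus S$ the join $a\vee b$ and meet $a\wedge b$ computed in $\underline{L}$ lie in $L\setminus S$.
   Context: For $u\le v$ in a lattice $L$, $[u,v]=\{x\mid u\le x\le v\}$, $(v]=\{x\mid x\le v\}$, $[u)=\{x\mid u\le x\}$. An interval $[u,v]$ of $L$ is quasi-dismantling for $L$ if $u$ is supremum-prime in $(v]$ (for all $x,y\in(v]$, $u\le x\vee y$ implies $u\le x$ or $u\le y$) and $v$ is infimum-prime in $[u)$ (for all $x,y\in[u)$, $x\wedge y\le v$ implies $x\le v$ or $y\le v$). *)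

From mathcomp Require Import all_boot all_order.
Set Implicit Arguments. Unset Strict Implicit. Unset Printing Implicit Defensive.
Import Order.TTheory.
Local Open Scope order_scope.

Definition in_itv {d} {L : finLatticeType d} (u v x : L) : bool := (u <= x <= v).

Definition sup_prime_in {d} {L : finLatticeType d} (u v : L) : Prop :=
  forall x y : L, x <= v -> y <= v -> u <= x `|` y -> (u <= x) \/ (u <= y).

Definition inf_prime_in {d} {L : finLatticeType d} (u v : L) : Prop :=
  forall x y : L, u <= x -> u <= y -> x `&` y <= v -> (x <= v) \/ (y <= v).

Definition quasi_dismantling {d} {L : finLatticeType d} (u v : L) : Prop :=
  sup_prime_in u v /\ inf_prime_in u v.

From mathcomp Require Import all_boot all_order.
Import Order.TTheory.
Local Open Scope order_scope.

(* If a \/ b lay in [u,v], then a, b <= v and u <= a \/ b, so supremum-primality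
   of u in (v] puts a or b above u, i.e. inside [u,v]; dually for a /\ b. *)

Section QuasiDismantling.
Variables (d : Order.disp_t) (L : finLatticeType d) (u v : L).

Lemma join_notin_itv (a b : L) : sup_prime_in u v ->
  ~~ in_itv u v a -> ~~ in_itv u v b -> ~~ in_itv u v (a `|` b).
Proof.
rewrite /in_itv => u_sup_prime a_out b_out.
apply/negP => /andP[u_le_ab]; rewrite leUx => /andP[a_le_v b_le_v].
case: (u_sup_prime a b a_le_v b_le_v u_le_ab) => [u_le_a | u_le_b].
- by rewrite u_le_a a_le_v in a_out.
- by rewrite u_le_b b_le_v in b_out.
Qed.

Lemma meet_notin_itv (a b : L) : inf_prime_in u v ->
  ~~ in_itv u v a -> ~~ in_itv u v b -> ~~ in_itv u v (a `&` b).
Proof.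
rewrite /in_itv => v_inf_prime a_out b_out.
apply/negP => /andP[]; rewrite lexI => /andP[u_le_a u_le_b] ab_le_v.
case: (v_inf_prime a b u_le_a u_le_b ab_le_v) => [a_le_v | b_le_v].
- by rewrite u_le_a a_le_v in a_out.
- by rewrite u_le_b b_le_v in b_out.
Qed.

End QuasiDismantling.

Theorem lemma3 (d : Order.disp_t) (L : finLatticeType d) (u v : L) :
  u <= v -> quasi_dismantling u v ->
  forall a b : L, ~~ in_itv u v a -> ~~ in_itv u v b ->
    ~~ in_itv u v (a `|` b) /\ ~~ in_itv u v (a `&` b).
Proof.
move=> _ [u_sup_prime v_inf_prime] a b a_out b_out; split.
- exact: join_notin_itv.
- exact: meet_notin_itv.
Qed.
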